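(* Fix probability distributions $P$ and $Q$ on a common measurable space. Then the function $\gamma\mapsto D_{\infty,\gamma}(P,Q)$ is non-decreasing on $\gamma>0$.
   Context: The Tsallis $\gamma$-logarithm is $\log_\gamma(x)=\log x$ if $\gamma=1$ and $\log_\gamma(x)=\frac{x^{1-\gamma}-1}{1-\gamma}$ if $\gamma\ne1$, for $x\ge0$. The Tsallis $\gamma$-max-divergence is $D_{\infty,\gamma}(P,Q)=\sup_B\log_\gamma(P(B))-\log_\gamma(Q(B))$, supremum over measurable sets $B$. *)

From HB Require Import structures.
From mathcomp Require Import all_boot all_order all_algebra.
From mathcomp Require Import all_classical all_reals all_analysis.
Set Implicit Arguments. Unset Strict Implicit. Unset Printing Implicit Defensive.
Import Order.TTheory GRing.Theory Num.Theory.
Local Open Scope classical_set_scope.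
Local Open Scope ring_scope.

(* Tsallis gamma-logarithm on [0, +oo), extended-real valued:
   log_1 x = ln x, log_g x = (x^(1-g) - 1)/(1-g) for g <> 1.
   At x = 0 the value is -oo when g >= 1 (limit), and -1/(1-g) when g < 1
   (which powR gives directly since 0 `^ a = 0 for a <> 0). *)
Definition tlog (R : realType) (g x : R) : \bar R :=
  if (x == 0) && (1 <= g) then -oo%E
  else (if g == 1 then ln x else (x `^ (1 - g) - 1) / (1 - g))%:E.

(* Tsallis gamma-max-divergence: sup over measurable sets B of
   log_g(P B) - log_g(Q B) (in \bar R; mathcomp's convention -oo + +oo = -oo). *)
Definition tsallis_maxdiv (d : measure_display) (T : measurableType d)
  (R : realType) (g : R) (P Q : probability T R) : \bar R :=
  ereal_sup [set (tlog g (fine (P B)) - tlog g (fine (Q B)))%E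
            | B in [set B : set T | measurable B]].

(* The derivative of [log_g] is [x ^ -g], which on [0 < x <= 1] grows with
   [g]; hence for [q < p] in [[0, 1]] the increment [log_g p - log_g q] is
   nondecreasing in [g].  For [p <= q] the increment is nonpositive, while
   [D_g(P, Q) >= 0] (take the whole space for [B]). *)

From HB Require Import structures.
From mathcomp Require Import all_boot all_order all_algebra.
From mathcomp Require Import all_classical all_reals all_analysis.
From mathcomp Require Import lra.
Set Implicit Arguments. Unset Strict Implicit. Unset Printing Implicit Defensive.
Import Order.TTheory GRing.Theory Num.Theory.
Local Open Scope ring_scope.

Lemma ge0_is_derive_ndecr (R : realType) (f f' : R -> R) (a b : R) :
  {in `]a, b], forall x : R, is_derive x 1 f (f' x)} ->
  {in `]a, b], forall x, 0 <= f' x} ->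
  {in `]a, b] &, {homo f : x y / x <= y}}.
Proof.
move=> df f'_ge0 x y; rewrite !in_itv /= => /andP[ax _] /andP[_ yb] xy.
have sub_ab z : x <= z -> z <= y -> z \in `]a, b].
  by move=> xz zy; rewrite in_itv /= (lt_le_trans ax xz) (le_trans zy yb).
apply: (@ger0_derive1_ndecr _ f x y) => //.
- move=> z; rewrite in_itv /= => /andP[xz zy].
  by have [] := df z (sub_ab z (ltW xz) (ltW zy)).
- move=> z; rewrite in_itv /= => /andP[xz zy].
  have abz := sub_ab z (ltW xz) (ltW zy).
  by rewrite derive1E; have [_ ->] := df z abz; apply: f'_ge0.
- apply: derivable_within_continuous => z; rewrite in_itv /= => /andP[xz zy].
  by have [] := df z (sub_ab z xz zy).
Qed.

Section tsallis_logarithm.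
Variable R : realType.
Implicit Types g x y p q : R.

Definition tlogr g x : R :=
  if g == 1 then ln x else (x `^ (1 - g) - 1) / (1 - g).

Lemma tlogE g x : (x != 0) || (g < 1) -> tlog g x = (tlogr g x)%:E.
Proof.
move=> h; rewrite /tlog /tlogr; case: ifP => // /andP[/eqP x0 g1].
by move: h; rewrite x0 eqxx /= ltNge g1.
Qed.

Lemma tlog0 g : 1 <= g -> tlog g 0 = -oo%E.
Proof. by move=> g1; rewrite /tlog eqxx g1. Qed.

Lemma tlog1 g : tlog g 1 = 0%E.
Proof.
rewrite tlogE ?oner_neq0 // /tlogr powR1 subrr mul0r ln1.
by case: ifP.
Qed.

Lemma tlogrB0 g x : g < 1 -> tlogr g x - tlogr g 0 = x `^ (1 - g) / (1 - g).
Proof.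
move=> g1; have g1_neq0 : 1 - g != 0 by rewrite subr_eq0 eq_sym lt_eqF.
by rewrite /tlogr lt_eqF // powR0 // -mulrBl sub0r opprK subrK.
Qed.

Lemma is_derive_tlogr g x : 0 < x -> is_derive x 1 (tlogr g) (x `^ (- g)).
Proof.
move=> x0; rewrite /tlogr; case: eqP => [->|/eqP g1].
  by rewrite powR_inv1 ?ltW //; exact: is_derive1_ln.
have g1_neq0 : 1 - g != 0 by rewrite subr_eq0 eq_sym.
have -> : (fun y => (y `^ (1 - g) - 1) / (1 - g)) =
          (1 - g)^-1 \*: ((@powR R ^~ (1 - g)) - cst 1).
  by apply: funext => y; rewrite /= mulrC.
apply: is_derive_eq.
  by apply: is_deriveZ; apply: is_deriveB; exact: is_derive1_powR.
by rewrite subr0 /GRing.scale /= mulrA mulVf // mul1r addrAC subrr add0r.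
Qed.

Lemma tlogr_ndecr g : {in `]0, +oo[ &, {homo tlogr g : x y / x <= y}}.
Proof.
move=> x y; rewrite !in_itv /= !andbT => x0 y0 xy.
apply: (@ge0_is_derive_ndecr _ _ (fun x => x `^ (- g)) 0 y) => //.
- by move=> z; rewrite in_itv /= => /andP[z0 _]; exact: is_derive_tlogr.
- by move=> z _; exact: powR_ge0.
- by rewrite in_itv /= x0 xy.
- by rewrite in_itv /= y0 lexx.
Qed.

Lemma tlog_ndecr g : {in `[0, 1] &, {homo tlog g : x y / x <= y >-> (x <= y)%E}}.
Proof.
move=> x y; rewrite !in_itv /= => /andP[x0 _] /andP[_ y1] xy.
have [->|x_neq0] := eqVneq x 0; last first.
  have x_gt0 : 0 < x by rewrite lt_neqAle eq_sym x_neq0.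
  have y_gt0 : 0 < y by exact: lt_le_trans xy.
  rewrite !tlogE ?x_neq0 ?gt_eqF // lee_fin.
  by apply: tlogr_ndecr; rewrite // in_itv /= andbT.
have [g1|g1] := leP 1 g; first by rewrite tlog0 // leNye.
rewrite !tlogE ?g1 ?orbT // lee_fin -subr_ge0 tlogrB0 //.
by rewrite divr_ge0 ?powR_ge0 // subr_ge0 ltW.
Qed.

Lemma le_tlogrB_order g1 g2 q p : g1 <= g2 -> 0 < q -> q <= p -> p <= 1 ->
  tlogr g1 p - tlogr g1 q <= tlogr g2 p - tlogr g2 q.
Proof.
move=> g12 q0 qp p1.
suff : (tlogr g2 - tlogr g1) q <= (tlogr g2 - tlogr g1) p by rewrite !fctE; lra.
have q_itv : q \in `]0, 1] by rewrite in_itv /= q0 (le_trans qp p1).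
have p_itv : p \in `]0, 1] by rewrite in_itv /= (lt_le_trans q0 qp) p1.
apply: (@ge0_is_derive_ndecr _ _ (fun x => x `^ (- g2) - x `^ (- g1)) 0 1) => //.
  move=> x; rewrite in_itv /= => /andP[x0 _].
  by apply: is_deriveB; exact: is_derive_tlogr.
move=> x; rewrite in_itv /= => x_itv; rewrite subr_ge0; apply: ger_powR => //.
by rewrite lerN2.
Qed.

Lemma le_tlogB_order g1 g2 q p : g1 <= g2 -> 0 <= q -> q < p -> p <= 1 ->
  (tlog g1 p - tlog g1 q <= tlog g2 p - tlog g2 q)%E.
Proof.
move=> g12 q0 qp p1.
have p_gt0 : 0 < p by exact: le_lt_trans qp.
have [->|q_neq0] := eqVneq q 0; last first.
  rewrite !tlogE ?q_neq0 ?gt_eqF // -!EFinB lee_fin.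
  by apply: le_tlogrB_order => //; [rewrite lt_neqAle eq_sym q_neq0 | exact: ltW].
have [g2_ge1|g2_lt1] := leP 1 g2.
  by rewrite (tlog0 g2_ge1) (@tlogE g2 p) ?gt_eqF // leey.
have g1_lt1 : g1 < 1 by exact: le_lt_trans g2_lt1.
rewrite !tlogE ?g1_lt1 ?g2_lt1 ?orbT // -!EFinB lee_fin !tlogrB0 //.
have a2_gt0 : 0 < 1 - g2 by rewrite subr_gt0.
have a21 : 1 - g2 <= 1 - g1 by rewrite lerB.
apply: ler_pM.
- exact: powR_ge0.
- by rewrite invr_ge0 (le_trans (ltW a2_gt0)).
- by apply: ger_powR; rewrite ?p_gt0 ?p1.
- by rewrite lef_pV2 ?posrE // (lt_le_trans a2_gt0).
Qed.

End tsallis_logarithm.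

Section tsallis_divergence.
Context {d : measure_display} {T : measurableType d} {R : realType}.

Lemma probability_fine_itv (P : probability T R) {B : set T} :
  measurable B -> fine (P B) \in `[0, 1].
Proof.
move=> mB; rewrite in_itv /= fine_ge0 //.
have := probability_le1 P mB; have := measure_ge0 P B.
by case: (P B) => //= r; rewrite !lee_fin.
Qed.

Lemma tsallis_maxdiv_ge0 (g : R) (P Q : probability T R) :
  (0 <= tsallis_maxdiv g P Q)%E.
Proof.
apply: ereal_sup_ubound; exists setT; first exact: measurableT.
by rewrite !probability_setT /= tlog1 subee.
Qed.

End tsallis_divergence.

Theorem proposition2 (d : measure_display) (T : measurableType d) (R : realType)
  (P Q : probability T R) (g1 g2 : R) :
  0 < g1 -> g1 <= g2 ->
  (tsallis_maxdiv g1 P Q <= tsallis_maxdiv g2 P Q)%E.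
Proof.
move=> _ g12; rewrite {1}/tsallis_maxdiv.
apply: ge_ereal_sup => _ [B mB <-].
have PB := probability_fine_itv P mB; have QB := probability_fine_itv Q mB.
have [PQ|QP] := leP (fine (P B)) (fine (Q B)).
  apply: le_trans (tsallis_maxdiv_ge0 g2 P Q).
  by rewrite sube_le0; exact: tlog_ndecr.
move: PB QB; rewrite !in_itv /= => /andP[_ P1] /andP[Q0 _].
apply: le_trans (le_tlogB_order g12 Q0 QP P1) _.
by apply: ereal_sup_ubound; exists B.
Qed.
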